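(* Let $p$ be a prime and $n\geq 2$. If $B$ is a minimal blocking set with respect to lines in $PG(n,p)$ such that every line meets $B$ in a number of points congruent to $1\pmod p$, then $B$ is a hyperplane.
   Context: A blocking set with respect to lines is a point set meeting every line. It is minimal if no proper subset is a blocking set. *)

(* PG(n,p) modelled as the lattice of subspaces of 'F_p^(n+1),
   a subspace being represented canonically by a square matrix A with <<A>> = A. *)
From HB Require Import structures.
From mathcomp Require Import all_boot all_order all_algebra.
Set Implicit Arguments. Unset Strict Implicit. Unset Printing Implicit Defensive.
Import GRing.Theory.

(* A projective subspace of PG(n,p) of projective dimension d is a vector
   subspace of 'F_p^(n+1) of rank d+1, represented canonically. *)
Definition psub_pred (p n d : nat) (A : 'M['F_p]_(n.+1)) : bool :=
  (<<A>>%MS == A) && (\rank A == d.+1).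

Definition ppoint (p n : nat) := {A : 'M['F_p]_(n.+1) | psub_pred 0 A}.
Definition pline (p n : nat) := {A : 'M['F_p]_(n.+1) | psub_pred 1 A}.

Definition points_on (p n : nat) (S : 'M['F_p]_(n.+1)) : {set ppoint p n} :=
  [set x : ppoint p n | (val x <= S)%MS].

Definition blocking_set (p n : nat) (B : {set ppoint p n}) : Prop :=
  forall L : pline p n, exists x, x \in B :&: points_on (val L).

Definition minimal_blocking_set (p n : nat) (B : {set ppoint p n}) : Prop :=
  blocking_set B /\ (forall B' : {set ppoint p n}, B' \proper B -> ~ blocking_set B').

Definition is_hyperplane (p n : nat) (B : {set ppoint p n}) : Prop :=
  exists H : 'M['F_p]_(n.+1), (<<H>>%MS == H) /\ \rank H = n /\ B = points_on H.

From HB Require Import structures.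
From mathcomp Require Import all_boot all_order all_algebra zify.
Set Implicit Arguments. Unset Strict Implicit. Unset Printing Implicit Defensive.
Import GRing.Theory.

(* If a line L contains two points of B, then
   |B ∩ L| >= 2 and |B ∩ L| = 1 (mod p) force |B ∩ L| >= p + 1 >= |L|,
   so L lies entirely in B: B is closed under joining points.  By induction
   on a spanning family this shows that B is the point set of the subspace
   H spanned by B.  Finally the rank of H is pinned down:
   - a subspace meeting every line has codimension at most one (otherwise
     its complement contains a line), so rank H >= n;
   - rank H = n + 1 would make B the whole space, which is not a minimal
     blocking set (every line has two points, so one point may be removed).
   Hence rank H = n and B is a hyperplane. *)

Section ProjectiveSpace.
Variables (p n : nat).
Local Notation F := 'F_p.
Local Notation pt := (ppoint p n).
Local Notation line := (pline p n).

Lemma ppoint_gen (x : pt) : <<val x>>%MS = val x.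
Proof. by case/andP: (valP x) => /eqP. Qed.

Lemma ppoint_rank (x : pt) : \rank (val x) = 1%N.
Proof. by case/andP: (valP x) => _ /eqP. Qed.

Lemma pline_rank (L : line) : \rank (val L) = 2.
Proof. by case/andP: (valP L) => _ /eqP. Qed.

Lemma ppoint_neq0 (x : pt) : val x != 0%R.
Proof. by rewrite -mxrank_eq0 ppoint_rank. Qed.

Lemma ppoint_sub_eq (x y : pt) : (val x <= val y)%MS -> x = y.
Proof.
move=> xy; apply: val_inj; rewrite -ppoint_gen -(ppoint_gen y); apply: eq_genmx.
by apply/eqmxP; rewrite -(mxrank_leqif_eq xy).2 !ppoint_rank.
Qed.

Lemma rank_adds_notsub m1 m2 (A : 'M[F]_(m1, n.+1)) (C : 'M[F]_(m2, n.+1)) :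
  \rank C = 1%N -> ~~ (C <= A)%MS -> \rank (A + C)%MS = (\rank A).+1.
Proof.
move=> rC nCA; apply/eqP; rewrite eqn_leq; apply/andP; split.
  by have := (mxrank_adds_leqif A C).1; rewrite rC addn1.
by apply: rank_ltmx; rewrite ltmxE addsmxSl addsmx_sub submx_refl.
Qed.

Lemma row_point_subproof (w : 'rV[F]_n.+1) : w != 0%R -> psub_pred 0 <<w>>%MS.
Proof. by move=> nz; rewrite /psub_pred genmx_id eqxx genmxE rank_rV nz. Qed.

Lemma base_point_subproof : psub_pred 0 <<delta_mx ord0 ord0 : 'rV[F]_n.+1>>%MS.
Proof. by rewrite /psub_pred genmx_id eqxx genmxE mxrank_delta. Qed.

Definition base_point : pt := exist (psub_pred 0) _ base_point_subproof.

(* The point spanned by a nonzero row vector (the base point for the zero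
   vector, so that the map is total). *)
Definition row_point (w : 'rV[F]_n.+1) : pt := insubd base_point <<w>>%MS.

Lemma row_pointE (w : 'rV[F]_n.+1) : w != 0%R -> val (row_point w) = <<w>>%MS.
Proof. by move=> nz; rewrite /row_point insubdK //; apply: row_point_subproof. Qed.

Lemma row_point_eqmx (w w' : 'rV[F]_n.+1) : (w :=: w')%MS -> row_point w = row_point w'.
Proof. by move=> e; rewrite /row_point (eq_genmx e). Qed.

Lemma ppoint_row (x : pt) : exists2 w : 'rV[F]_n.+1, w != 0%R & x = row_point w.
Proof.
have nz : nz_row (val x) != 0%R by rewrite nz_row_eq0 ppoint_neq0.
exists (nz_row (val x)) => //; apply: esym; apply: ppoint_sub_eq.
by rewrite row_pointE // genmxE nz_row_sub.
Qed.

Lemma independent_rows m (C : 'M[F]_(m, n.+1)) : 1 < \rank C ->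
  exists u v : 'rV[F]_n.+1,
    [/\ u != 0%R, ~~ (v <= u)%MS, (u <= C)%MS & (v <= C)%MS].
Proof.
move=> rC; have : ~~ (C <= nz_row C)%MS.
  by apply: contraTN rC => /mxrankS le; rewrite -leqNgt (leq_trans le) ?rank_leq_row.
case/row_subPn => i niu; exists (nz_row C), (row i C).
by rewrite nz_row_eq0 -mxrank_eq0 nz_row_sub row_sub niu; split => //; lia.
Qed.

Lemma notsub_neq0 (u v : 'rV[F]_n.+1) : ~~ (v <= u)%MS -> v != 0%R.
Proof. by apply: contraNneq => ->; apply: sub0mx. Qed.

Lemma rank_independent (u v : 'rV[F]_n.+1) :
  u != 0%R -> ~~ (v <= u)%MS -> \rank (u + v)%MS = 2.
Proof.
by move=> unz nvu; rewrite rank_adds_notsub ?rank_rV ?unz ?(notsub_neq0 nvu).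
Qed.

Lemma line_subproof (u v : 'rV[F]_n.+1) :
  u != 0%R -> ~~ (v <= u)%MS -> psub_pred 1 <<(u + v)%MS>>%MS.
Proof.
by move=> unz nvu; rewrite /psub_pred genmx_id eqxx genmxE rank_independent.
Qed.

Lemma line_in_subspace m (C : 'M[F]_(m, n.+1)) : 1 < \rank C ->
  exists L : line, (val L <= C)%MS.
Proof.
case/independent_rows => u [v [unz nvu uC vC]].
exists (exist (psub_pred 1) _ (line_subproof unz nvu)).
by rewrite /= genmxE addsmx_sub uC vC.
Qed.

Lemma pline_basis (L : line) :
  exists u v : 'rV[F]_n.+1, [/\ u != 0%R, ~~ (v <= u)%MS & (val L :=: u + v)%MS].
Proof.
have [|u [v [unz nvu uL vL]]] := @independent_rows _ (val L); first by rewrite pline_rank.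
exists u, v; split => //; apply/eqmx_sym/eqmxP.
have uvL : (u + v <= val L)%MS by rewrite addsmx_sub uL vL.
by rewrite -(mxrank_leqif_eq uvL).2 rank_independent ?pline_rank.
Qed.

Lemma pline_two_points (L : line) : exists x y : pt,
  [/\ x != y, x \in points_on (val L) & y \in points_on (val L)].
Proof.
have [u [v [unz nvu /eqmxP/andP[_ uvL]]]] := pline_basis L.
have vnz := notsub_neq0 nvu.
have onL w : w != 0%R -> (w <= u + v)%MS -> row_point w \in points_on (val L).
  by move=> wnz wuv; rewrite inE row_pointE // genmxE (submx_trans wuv).
exists (row_point u), (row_point v); rewrite !onL ?addsmxSl ?addsmxSr //.
split=> //; apply: contra nvu => /eqP e.
by rewrite -genmxE -row_pointE // -e row_pointE // genmxE.
Qed.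

(* A line of PG(n,p) has at most p + 1 points: they are <v> and <u + a v>. *)
Lemma pline_card (L : line) : prime p -> #|points_on (val L)| <= p.+1.
Proof.
move=> pr; have [u [v [unz nvu eqL]]] := pline_basis L.
pose f (o : option F) : pt :=
  if o is Some a then row_point (u + a *: v) else row_point v.
apply: (@leq_trans #|[set f o | o in [set: option F]]|); last first.
  by rewrite (leq_trans (leq_imset_card _ _)) // cardsT card_option card_Fp.
apply/subset_leq_card/subsetP => z; have [w wnz ->] := ppoint_row z.
rewrite inE row_pointE // genmxE eqL => /sub_addsmxP[[c1 c2]] /=.
rewrite [c1]mx11_scalar [c2]mx11_scalar !mul_scalar_mx.
set a := (c1 0 0)%R; set b := (c2 0 0)%R => wE.
have [a0|anz] := eqVneq a 0%R.
  apply/imsetP; exists None; rewrite ?inE //=; apply: row_point_eqmx.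
  rewrite wE a0 scale0r add0r; apply: eqmx_scale.
  by apply: contraNneq wnz => b0; rewrite wE a0 b0 !scale0r addr0.
apply/imsetP; exists (Some (b / a)%R); rewrite ?inE //=; apply: row_point_eqmx.
have -> : w = (a *: (u + (b / a) *: v))%R by rewrite wE scalerDr scalerA mulrC divfK.
exact: eqmx_scale.
Qed.

Lemma join_subproof (x y : pt) : x != y -> psub_pred 1 <<(val x + val y)%MS>>%MS.
Proof.
move=> nxy; rewrite /psub_pred genmx_id eqxx genmxE.
rewrite rank_adds_notsub ?ppoint_rank //.
by apply: contra nxy => /ppoint_sub_eq ->.
Qed.

Definition join (x y : pt) (nxy : x != y) : line :=
  exist (psub_pred 1) _ (join_subproof nxy).

(* Through a point x outside a subspace S, every other point z of x + S lies
   on the line joining x to some point y of S (namely y = (x + z) ∩ S). *)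
Lemma point_between m (S : 'M[F]_(m, n.+1)) (x z : pt) :
  ~~ (val x <= S)%MS -> z != x -> (val z <= val x + S)%MS ->
  exists2 y : pt, (val y <= S)%MS & (val z <= val x + val y)%MS.
Proof.
move=> nxS nzx zxS; set Y := ((val z + val x) :&: S)%MS.
have rzx : \rank (val z + val x)%MS = 2.
  by rewrite rank_adds_notsub ?ppoint_rank //; apply: contra nzx => /ppoint_sub_eq ->.
have sum_eq : (val z + val x + S :=: S + val x)%MS.
  apply/eqmxP/andP; split.
    by rewrite !addsmx_sub addsmxSl addsmxSr addsmxC zxS.
  by rewrite addsmx_sub addsmxSr (submx_trans (addsmxSr (val z) _) (addsmxSl _ S)).
have rY : \rank Y = 1%N.
  have := mxrank_sum_cap (val z + val x)%MS S.
  rewrite sum_eq rank_adds_notsub ?ppoint_rank // rzx -/Y; lia.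
have Ypt : psub_pred 0 <<Y>>%MS by rewrite /psub_pred genmx_id eqxx genmxE rY.
exists (exist (psub_pred 0) _ Ypt); first by rewrite /= genmxE capmxSr.
have nxY : ~~ (val x <= <<Y>>)%MS.
  by apply: contra nxS => /submx_trans-> //; rewrite genmxE capmxSr.
have xYzx : (val x + <<Y>> <= val z + val x)%MS.
  by rewrite addsmx_sub addsmxSr genmxE capmxSl.
have rxY : \rank (val x + <<Y>>)%MS = 2.
  by rewrite addsmxC rank_adds_notsub ?ppoint_rank // mxrank_gen rY.
have join_eq : (val x + <<Y>> :=: val z + val x)%MS.
  by apply/eqmxP; rewrite -(mxrank_leqif_eq xYzx).2 rxY rzx.
by rewrite /= join_eq addsmxSl.
Qed.

(* A subspace meeting every line has codimension at most one: otherwise its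
   complement has rank at least two and contains a line missing it. *)
Lemma blocking_subspace_rank (H : 'M[F]_n.+1) :
  blocking_set (points_on H) -> n <= \rank H.
Proof.
move=> blk; rewrite leqNgt; apply/negP => small.
have [|L LHC] := @line_in_subspace _ (H^C)%MS; first by rewrite mxrank_compl; lia.
have [x /setIP[]] := blk L; rewrite !inE => xH xL.
have : (val x <= H :&: H^C)%MS by rewrite sub_capmx xH (submx_trans xL LHC).
by rewrite capmx_compl submx0 (negbTE (ppoint_neq0 x)).
Qed.

(* The whole space is not a minimal blocking set: removing one point still
   leaves a point on every line, since lines carry two points. *)
Lemma whole_space_not_minimal : ~ minimal_blocking_set [set: pt].
Proof.
case=> _ minT; apply: (minT (setT :\ base_point)); first exact/properD1/in_setT.
move=> L; have [x [y [nxy xL yL]]] := pline_two_points L.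
have [xb|nxb] := eqVneq x base_point.
  by exists y; rewrite in_setI in_setD1 in_setT yL -xb eq_sym nxy.
by exists x; rewrite in_setI in_setD1 in_setT xL nxb.
Qed.

End ProjectiveSpace.

Lemma mod1_gt (k q : nat) : 1 < q -> 1 < k -> k = 1 %[mod q] -> q < k.
Proof.
move=> q_gt1 k_gt1; rewrite (modn_small q_gt1) => k_mod.
by have := divn_eq k q; rewrite k_mod; case: (k %/ q) => [|d] /=; nia.
Qed.

Section ModularBlockingSet.
Variables (p n : nat) (B : {set ppoint p n}).
Hypothesis p_prime : prime p.
Hypothesis B_mod : forall L : pline p n, #|B :&: points_on (val L)| = 1 %[mod p].
Local Notation pt := (ppoint p n).
Local Notation line := (pline p n).

Lemma line_sub_set (L : line) (x y : pt) : x \in B -> y \in B -> x != y ->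
  x \in points_on (val L) -> y \in points_on (val L) -> points_on (val L) \subset B.
Proof.
move=> xB yB nxy xL yL; set S := B :&: points_on (val L).
have xyS : [set x; y] \subset S.
  by apply/subsetP => t /set2P[]->; rewrite in_setI ?xB ?yB ?xL ?yL.
have two : 1 < #|S| by rewrite (leq_trans _ (subset_leq_card xyS)) ?cards2 ?nxy.
have many : p.+1 <= #|S| := mod1_gt (prime_gt1 p_prime) two (B_mod L).
suff <- : S = points_on (val L) by apply: subsetIl.
apply/eqP; rewrite eqEcard subsetIr /=.
exact: leq_trans (pline_card L p_prime) many.
Qed.

Lemma join_in_set (x y z : pt) : x \in B -> y \in B -> x != y ->
  (val z <= val x + val y)%MS -> z \in B.
Proof.
move=> xB yB nxy zxy.
have onJ t : (val t <= val x + val y)%MS -> t \in points_on (val (join nxy)).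
  by move=> t_le; rewrite inE /= genmxE.
have := line_sub_set xB yB nxy (onJ _ (addsmxSl _ _)) (onJ _ (addsmxSr _ _)).
by move/subsetP; apply; apply: onJ.
Qed.

Lemma span_in_set (s : seq pt) : all (mem B) s ->
  forall z : pt, (val z <= \sum_(x <- s) val x)%MS -> z \in B.
Proof.
elim: s => [_ z|x s IH /andP[xB sB] z].
  by rewrite big_nil submx0 (negbTE (ppoint_neq0 z)).
rewrite big_cons; set S := (\sum_(y <- s) val y)%MS => zxS.
have [xS|nxS] := boolP (val x <= S)%MS.
  by apply: IH; rewrite // (submx_trans zxS) // addsmx_sub xS submx_refl.
have [->//|nzx] := eqVneq z x.
have [y yS zxy] := point_between nxS nzx zxS.
have nxy : x != y by apply: contraNneq nxS => ->.
exact: join_in_set xB (IH sB y yS) nxy zxy.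
Qed.

Lemma set_eq_span : B = points_on <<(\sum_(x in B) val x)%MS>>%MS.
Proof.
apply/setP => z; rewrite inE genmxE; apply/idP/idP => [zB|].
  exact: (sumsmx_sup z).
rewrite -big_enum; apply: span_in_set.
by apply/allP => x; rewrite mem_enum.
Qed.

End ModularBlockingSet.

Theorem mainTheorem9 (p n : nat) (hp : prime p) (hn : 2 <= n)
  (B : {set ppoint p n}) :
  minimal_blocking_set B ->
  (forall L : pline p n, #|B :&: points_on (val L)| = 1 %[mod p]) ->
  is_hyperplane B.
Proof.
move=> minB hB; set H := <<(\sum_(x in B) val x)%MS>>%MS.
have BH : B = points_on H := set_eq_span hp hB.
have rank_lo : n <= \rank H by apply: blocking_subspace_rank; rewrite -BH; case: minB.
have rank_hi : \rank H < n.+1.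
  rewrite ltn_neqAle rank_leq_col andbT; apply/eqP => full.
  apply: (@whole_space_not_minimal p n); rewrite -(_ : B = setT) //.
  by apply/setP => z; rewrite BH !inE submx_full // /row_full full.
exists H; split; first by rewrite genmx_id.
by split => //; apply/eqP; rewrite eqn_leq rank_lo -ltnS rank_hi.
Qed.
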